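(* For $0\le p\le1$, let $\mathcal{E}(p)$ be the qubit ensemble consisting of the states $|0\rangle,\ |1\rangle,\ (|0\rangle+|1\rangle)/\sqrt2,\ (|0\rangle-|1\rangle)/\sqrt2$ with probabilities $p/2,\ p/2,\ (1-p)/2,\ (1-p)/2$ respectively. Then $J(\mathcal{E}(p))=\frac34+\frac14|2p-1|$. In particular the BB84 ensemble $\mathcal{E}(1/2)$ has $J=3/4$.
   Context: Fidelity: $F(\rho,\sigma)=\big(\mathrm{tr}\sqrt{\rho^{1/2}\sigma\rho^{1/2}}\big)^2$. For an orthonormal basis $\{|j\rangle\}$ of $\mathbb{C}^2$ and state $\rho$, $\rho'=\sum_j\langle j|\rho|j\rangle|j\rangle\langle j|$. The ECCC of a finite ensemble is $J(\{q_i,\rho_i\})=\max_{\{|j\rangle\}}\sum_iq_iF(\rho_i,\rho_i')$, the maximum over all orthonormal bases of $\mathbb{C}^2$. Here $\{|0\rangle,|1\rangle\}$ is the computational basis. *)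

From Stdlib Require Import Reals Lra List ClassicalEpsilon.
Open Scope R_scope.

Record C := mkC { re : R; im : R }.
Definition C0 : C := mkC 0 0.
Definition C1 : C := mkC 1 0.
Definition RtoC (x : R) : C := mkC x 0.
Definition Cadd (a b : C) : C := mkC (re a + re b) (im a + im b).
Definition Cmul (a b : C) : C :=
  mkC (re a * re b - im a * im b) (re a * im b + im a * re b).
Definition Cconj (a : C) : C := mkC (re a) (- im a).

Record V2 := mkV { v0 : C; v1 : C }.
Record M2 := mkM { m00 : C; m01 : C; m10 : C; m11 : C }.

Definition M0 : M2 := mkM C0 C0 C0 C0.

Definition inner (u v : V2) : C :=
  Cadd (Cmul (Cconj (v0 u)) (v0 v)) (Cmul (Cconj (v1 u)) (v1 v)).

Definition mapply (A : M2) (x : V2) : V2 :=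
  mkV (Cadd (Cmul (m00 A) (v0 x)) (Cmul (m01 A) (v1 x)))
      (Cadd (Cmul (m10 A) (v0 x)) (Cmul (m11 A) (v1 x))).

Definition mmul (A B : M2) : M2 :=
  mkM (Cadd (Cmul (m00 A) (m00 B)) (Cmul (m01 A) (m10 B)))
      (Cadd (Cmul (m00 A) (m01 B)) (Cmul (m01 A) (m11 B)))
      (Cadd (Cmul (m10 A) (m00 B)) (Cmul (m11 A) (m10 B)))
      (Cadd (Cmul (m10 A) (m01 B)) (Cmul (m11 A) (m11 B))).

Definition madd (A B : M2) : M2 :=
  mkM (Cadd (m00 A) (m00 B)) (Cadd (m01 A) (m01 B))
      (Cadd (m10 A) (m10 B)) (Cadd (m11 A) (m11 B)).

Definition mscale (c : C) (A : M2) : M2 :=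
  mkM (Cmul c (m00 A)) (Cmul c (m01 A)) (Cmul c (m10 A)) (Cmul c (m11 A)).

Definition adjoint (A : M2) : M2 :=
  mkM (Cconj (m00 A)) (Cconj (m10 A)) (Cconj (m01 A)) (Cconj (m11 A)).

Definition trace (A : M2) : C := Cadd (m00 A) (m11 A).

Definition outer (u v : V2) : M2 :=
  mkM (Cmul (v0 u) (Cconj (v0 v))) (Cmul (v0 u) (Cconj (v1 v)))
      (Cmul (v1 u) (Cconj (v0 v))) (Cmul (v1 u) (Cconj (v1 v))).

Definition psd (A : M2) : Prop :=
  adjoint A = A /\ forall x : V2, 0 <= re (inner x (mapply A x)).

Definition msqrt (A : M2) : M2 :=
  epsilon (inhabits M0) (fun S => psd S /\ mmul S S = A).

(* Uhlmann fidelity F(rho,sigma) = (tr sqrt(rho^{1/2} sigma rho^{1/2}))^2;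
   the trace of a PSD matrix is real, so we take its real part. *)
Definition fidelity (rho sigma : M2) : R :=
  let r := msqrt rho in re (trace (msqrt (mmul r (mmul sigma r)))) ^ 2.

Definition orthonormal (u v : V2) : Prop :=
  inner u u = C1 /\ inner v v = C1 /\ inner u v = C0.

Definition dephase (u v : V2) (rho : M2) : M2 :=
  madd (mscale (inner u (mapply rho u)) (outer u u))
       (mscale (inner v (mapply rho v)) (outer v v)).

(* a finite ensemble: list of (probability, state) *)
Definition ensemble := list (R * M2).

Definition eccc_obj (E : ensemble) (u v : V2) : R :=
  fold_right (fun qr acc => fst qr * fidelity (snd qr) (dephase u v (snd qr)) + acc)
             0 E.

Definition is_ECCC (E : ensemble) (J : R) : Prop :=
  (forall u v, orthonormal u v -> eccc_obj E u v <= J) /\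
  (exists u v, orthonormal u v /\ eccc_obj E u v = J).

Definition ket0 : V2 := mkV C1 C0.
Definition ket1 : V2 := mkV C0 C1.
Definition ketp : V2 := mkV (RtoC (/ sqrt 2)) (RtoC (/ sqrt 2)).
Definition ketm : V2 := mkV (RtoC (/ sqrt 2)) (RtoC (- / sqrt 2)).
Definition proj (u : V2) : M2 := outer u u.

Definition Ep (p : R) : ensemble :=
  (p / 2, proj ket0) :: (p / 2, proj ket1) ::
  ((1 - p) / 2, proj ketp) :: ((1 - p) / 2, proj ketm) :: nil.

From Stdlib Require Import Reals Lra Psatz Nsatz ClassicalEpsilon.
Open Scope R_scope.

(* For a unit vector u and c >= 0 the PSD square root of c|u><u| is sqrt c |u><u|, so the
   fidelity of a pure state |u><u| with any sigma is <u|sigma|u>.  Against its dephasing in a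
   basis {a, b} this gives w^2 + (1 - w)^2 with w = |<a|u>|^2, i.e. (1 + (n.m)^2)/2 for the
   Bloch vectors n of a and m of u.  The four states of E(p) have m = +-e_z, +-e_x, so the
   objective is (1 + p n_z^2 + (1 - p) n_x^2)/2, maximal on the unit sphere at n = e_z or e_x. *)

Definition nsq (z : C) : R := re z * re z + im z * im z.
Definition tr (A : M2) : R := re (trace A).
(* The determinant of a Hermitian matrix; [m10] is ignored. *)
Definition hdet (A : M2) : R := re (m00 A) * re (m11 A) - nsq (m01 A).
Definition vscale (d : C) (x : V2) : V2 := mkV (Cmul d (v0 x)) (Cmul d (v1 x)).
Definition perp (a : V2) : V2 := mkV (Cmul (RtoC (-1)) (Cconj (v1 a))) (Cconj (v0 a)).

Ltac expand_C :=
  repeat match goal with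
  | z : M2 |- _ => destruct z
  | z : V2 |- _ => destruct z
  | z : C |- _ => let r := fresh "r" in let i := fresh "i" in destruct z as [r i]
  end;
  unfold tr, hdet, vscale, perp, orthonormal, proj, ket0, ket1, ketp, ketm, nsq, mmul, madd,
    mscale, outer, inner, mapply, adjoint, trace, Cadd, Cmul, Cconj, RtoC, C1, C0 in *;
  cbn [re im v0 v1 m00 m01 m10 m11] in *.

Lemma msqrt_spec A : (exists S, psd S /\ mmul S S = A) ->
  psd (msqrt A) /\ mmul (msqrt A) (msqrt A) = A.
Proof. exact (epsilon_spec (inhabits M0) (fun S => psd S /\ mmul S S = A)). Qed.

Lemma psd_form S : psd S -> exists x y a b,
  S = mkM (mkC x 0) (mkC a b) (mkC a (- b)) (mkC y 0) /\ 0 <= x /\ 0 <= y.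
Proof.
  destruct S as [[x xi] [a b] [c d] [y yi]]; intros [Hadj Hpos].
  pose proof (Hpos (mkV C1 C0)) as Hx; pose proof (Hpos (mkV C0 C1)) as Hy.
  expand_C; injection Hadj; intros.
  exists x, y, a, b; split; [f_equal; f_equal; lra | lra].
Qed.

(* [(det S)^2 = det (S^2) = 0], so Cayley-Hamilton reads [S^2 = tr S * S]. *)
Lemma psd_sqr_singular S : psd S -> hdet (mmul S S) = 0 ->
  mmul S S = mscale (RtoC (tr S)) S /\ tr (mmul S S) = tr S * tr S /\ 0 <= tr S.
Proof.
  intros HS; destruct (psd_form S HS) as (x & y & a & b & -> & Hx & Hy).
  expand_C; intro Hdet.
  assert (Hsing : x * y - (a * a + b * b) = 0).
  { apply Rsqr_0_uniq; unfold Rsqr; nsatz. }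
  split; [f_equal; f_equal; nsatz | split; [nsatz | lra]].
Qed.

Lemma msqrt_singular M : (exists S, psd S /\ mmul S S = M) -> hdet M = 0 ->
  M = mscale (RtoC (tr (msqrt M))) (msqrt M) /\ tr (msqrt M) = sqrt (tr M).
Proof.
  intros Hex Hdet; destruct (msqrt_spec M Hex) as [Hpsd Hsq].
  revert Hpsd Hsq; generalize (msqrt M) as S; intros S Hpsd <-.
  destruct (psd_sqr_singular _ Hpsd Hdet) as (HCH & Htr & Hnn).
  split; [exact HCH |]. rewrite Htr, sqrt_square; lra.
Qed.

Lemma expect_madd A B x :
  inner x (mapply (madd A B) x) = Cadd (inner x (mapply A x)) (inner x (mapply B x)).
Proof. expand_C; f_equal; ring. Qed.

Lemma expect_mscale c A x : inner x (mapply (mscale c A) x) = Cmul c (inner x (mapply A x)).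
Proof. expand_C; f_equal; ring. Qed.

Lemma expect_proj u x : inner x (mapply (proj u) x) = RtoC (nsq (inner u x)).
Proof. expand_C; f_equal; ring. Qed.

Lemma nsq_inner_sym x y : nsq (inner x y) = nsq (inner y x).
Proof. expand_C; ring. Qed.

Lemma psd_scale_proj c u : 0 <= c -> psd (mscale (RtoC c) (proj u)).
Proof.
  intro Hc; split; [expand_C; f_equal; f_equal; ring |].
  intro x; rewrite expect_mscale, expect_proj; cbn.
  assert (0 <= nsq (inner u x)) by (unfold nsq; nra).
  nra.
Qed.

Lemma sqr_scale_proj c u : inner u u = C1 ->
  mmul (mscale (RtoC c) (proj u)) (mscale (RtoC c) (proj u)) = mscale (RtoC (c * c)) (proj u).
Proof. intro Hu; expand_C; injection Hu; intros; f_equal; f_equal; nsatz. Qed.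

Lemma hdet_scale_proj c u : hdet (mscale (RtoC c) (proj u)) = 0.
Proof. expand_C; ring. Qed.

Lemma tr_scale_proj c u : inner u u = C1 -> tr (mscale (RtoC c) (proj u)) = c.
Proof. intro Hu; expand_C; injection Hu; intros; nsatz. Qed.

Lemma mscale_RtoC1 A : mscale (RtoC 1) A = A.
Proof. expand_C; f_equal; f_equal; ring. Qed.

Lemma proj_sandwich u s :
  mmul (proj u) (mmul s (proj u)) = mscale (inner u (mapply s u)) (proj u).
Proof. expand_C; f_equal; f_equal; ring. Qed.

Lemma exists_sqrt_scale_proj c u : inner u u = C1 -> 0 <= c ->
  exists S, psd S /\ mmul S S = mscale (RtoC c) (proj u).
Proof.
  intros Hu Hc; exists (mscale (RtoC (sqrt c)) (proj u)).
  split; [apply psd_scale_proj, sqrt_pos |].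
  rewrite sqr_scale_proj, sqrt_sqrt by assumption; reflexivity.
Qed.

Lemma tr_msqrt_scale_proj c u : inner u u = C1 -> 0 <= c ->
  tr (msqrt (mscale (RtoC c) (proj u))) = sqrt c.
Proof.
  intros Hu Hc.
  destruct (msqrt_singular _ (exists_sqrt_scale_proj c u Hu Hc) (hdet_scale_proj c u)) as [_ Htr].
  rewrite Htr, tr_scale_proj by exact Hu; reflexivity.
Qed.

Lemma msqrt_proj u : inner u u = C1 -> msqrt (proj u) = proj u.
Proof.
  intro Hu.
  destruct (msqrt_singular _ (exists_sqrt_scale_proj 1 u Hu Rle_0_1) (hdet_scale_proj 1 u))
    as [HCH _].
  rewrite tr_msqrt_scale_proj, sqrt_1, !mscale_RtoC1 in HCH by (exact Hu || exact Rle_0_1).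
  symmetry; exact HCH.
Qed.

Lemma fidelity_proj u s c : inner u u = C1 -> inner u (mapply s u) = RtoC c -> 0 <= c ->
  fidelity (proj u) s = c.
Proof.
  intros Hu Hs Hc; unfold fidelity.
  rewrite msqrt_proj, proj_sandwich, Hs by exact Hu.
  fold (tr (msqrt (mscale (RtoC c) (proj u)))).
  rewrite tr_msqrt_scale_proj by assumption; apply pow2_sqrt, Hc.
Qed.

Lemma orthonormal_complement a b : orthonormal a b ->
  exists d, nsq d = 1 /\ b = vscale d (perp a).
Proof.
  intros (Ha & Hb & Hab).
  exists (Cadd (Cmul (v0 a) (v1 b)) (Cmul (RtoC (-1)) (Cmul (v1 a) (v0 b)))).
  expand_C; injection Ha; injection Hb; injection Hab; intros.
  split; [| f_equal; f_equal]; nsatz.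
Qed.

Lemma nsq_inner_vscale d x y : nsq (inner (vscale d x) y) = nsq d * nsq (inner x y).
Proof. expand_C; ring. Qed.

Lemma nsq_inner_perp a y :
  nsq (inner a y) + nsq (inner (perp a) y) = re (inner a a) * re (inner y y).
Proof. expand_C; ring. Qed.

Lemma parseval a b y : orthonormal a b -> inner y y = C1 ->
  nsq (inner a y) + nsq (inner b y) = 1.
Proof.
  intros Hab Hy; destruct (orthonormal_complement a b Hab) as (d & Hd & ->).
  rewrite nsq_inner_vscale, Hd, Rmult_1_l, nsq_inner_perp, (proj1 Hab), Hy; simpl; ring.
Qed.

Lemma expect_dephase_proj a b y :
  inner y (mapply (dephase a b (proj y)) y) = RtoC (nsq (inner a y) ^ 2 + nsq (inner b y) ^ 2).
Proof.
  unfold dephase; fold (proj a) (proj b).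
  rewrite expect_madd, !expect_mscale, !expect_proj, (nsq_inner_sym y a), (nsq_inner_sym y b).
  unfold Cadd, Cmul, RtoC; cbn [re im]; f_equal; ring.
Qed.

Lemma fidelity_dephase_proj a b y : orthonormal a b -> inner y y = C1 ->
  fidelity (proj y) (dephase a b (proj y)) = (1 + (2 * nsq (inner a y) - 1) ^ 2) / 2.
Proof.
  intros Hab Hy.
  rewrite (fidelity_proj _ _ _ Hy (expect_dephase_proj a b y))
    by (apply Rplus_le_le_0_compat; apply pow2_ge_0).
  replace (nsq (inner b y)) with (1 - nsq (inner a y))
    by (pose proof (parseval a b y Hab Hy); lra).
  field.
Qed.

Definition bloch_z (a : V2) : R := nsq (v0 a) - nsq (v1 a).
Definition bloch_x (a : V2) : R := 2 * re (Cmul (Cconj (v0 a)) (v1 a)).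

Lemma bloch_zx_le a : inner a a = C1 -> bloch_z a ^ 2 + bloch_x a ^ 2 <= 1.
Proof.
  destruct a as [[p0 q0] [p1 q1]]; unfold bloch_z, bloch_x; intro Ha; expand_C.
  injection Ha; intros _ Hn.
  assert (Hsphere : (p0 * p0 + q0 * q0 - (p1 * p1 + q1 * q1)) ^ 2 + (2 * (p0 * p1 + q0 * q1)) ^ 2
                    + (2 * (p0 * q1 - q0 * p1)) ^ 2 = (p0 * p0 + q0 * q0 + p1 * p1 + q1 * q1) ^ 2)
    by ring.
  pose proof (pow2_ge_0 (2 * (p0 * q1 - q0 * p1))).
  replace (p0 * p0 + q0 * q0 + p1 * p1 + q1 * q1) with 1 in Hsphere by lra.
  lra.
Qed.

Lemma inv_sqrt2_sqr : 2 * (/ sqrt 2 * / sqrt 2) = 1.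
Proof. rewrite <- Rinv_mult, sqrt_sqrt by lra; field. Qed.

Lemma ket0_bloch a : inner a a = C1 -> 2 * nsq (inner a ket0) - 1 = bloch_z a.
Proof. unfold bloch_z; intro Ha; expand_C; injection Ha; intros; lra. Qed.

Lemma ket1_bloch a : inner a a = C1 -> 2 * nsq (inner a ket1) - 1 = - bloch_z a.
Proof. unfold bloch_z; intro Ha; expand_C; injection Ha; intros; lra. Qed.

Lemma ketp_bloch a : inner a a = C1 -> 2 * nsq (inner a ketp) - 1 = bloch_x a.
Proof.
  unfold bloch_x; intro Ha; expand_C; injection Ha; intros.
  pose proof inv_sqrt2_sqr. set (h := / sqrt 2) in *. nsatz.
Qed.

Lemma ketm_bloch a : inner a a = C1 -> 2 * nsq (inner a ketm) - 1 = - bloch_x a.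
Proof.
  unfold bloch_x; intro Ha; expand_C; injection Ha; intros.
  pose proof inv_sqrt2_sqr. set (h := / sqrt 2) in *. nsatz.
Qed.

Lemma inner_ket0 : inner ket0 ket0 = C1.
Proof. expand_C; f_equal; ring. Qed.

Lemma inner_ket1 : inner ket1 ket1 = C1.
Proof. expand_C; f_equal; ring. Qed.

Lemma inner_ketp : inner ketp ketp = C1.
Proof.
  expand_C; pose proof inv_sqrt2_sqr; set (h := / sqrt 2) in *.
  f_equal; nsatz.
Qed.

Lemma inner_ketm : inner ketm ketm = C1.
Proof.
  expand_C; pose proof inv_sqrt2_sqr; set (h := / sqrt 2) in *.
  f_equal; nsatz.
Qed.

Lemma orthonormal_ket01 : orthonormal ket0 ket1.
Proof. split; [exact inner_ket0 | split; [exact inner_ket1 | expand_C; f_equal; ring]]. Qed.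

Lemma orthonormal_ketpm : orthonormal ketp ketm.
Proof. split; [exact inner_ketp | split; [exact inner_ketm | expand_C; f_equal; ring]]. Qed.

Lemma eccc_obj_Ep p a b : orthonormal a b ->
  eccc_obj (Ep p) a b = (1 + p * bloch_z a ^ 2 + (1 - p) * bloch_x a ^ 2) / 2.
Proof.
  intro Hab; pose proof (proj1 Hab) as Ha.
  unfold eccc_obj, Ep; cbn [fold_right fst snd].
  rewrite !fidelity_dephase_proj by (exact Hab || exact inner_ket0 || exact inner_ket1
                                     || exact inner_ketp || exact inner_ketm).
  rewrite ket0_bloch, ket1_bloch, ketp_bloch, ketm_bloch by exact Ha.
  field.
Qed.

Lemma bloch_ket0 : bloch_z ket0 = 1 /\ bloch_x ket0 = 0.
Proof. unfold bloch_z, bloch_x; expand_C; split; ring. Qed.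

Lemma bloch_ketp : bloch_z ketp = 0 /\ bloch_x ketp = 1.
Proof.
  unfold bloch_z, bloch_x; expand_C; pose proof inv_sqrt2_sqr; set (h := / sqrt 2) in *.
  split; nsatz.
Qed.

Lemma bloch_objective_le p z x : 0 <= p <= 1 -> z ^ 2 + x ^ 2 <= 1 ->
  (1 + p * z ^ 2 + (1 - p) * x ^ 2) / 2 <= 3 / 4 + 1 / 4 * Rabs (2 * p - 1).
Proof.
  intros Hp Hzx; pose proof (pow2_ge_0 z); pose proof (pow2_ge_0 x).
  destruct (Rle_dec (1 / 2) p).
  - rewrite Rabs_right by lra; nra.
  - rewrite Rabs_left by lra; nra.
Qed.

Theorem mainTheorem5 :
  (forall p : R, 0 <= p <= 1 ->
     is_ECCC (Ep p) (3 / 4 + 1 / 4 * Rabs (2 * p - 1))) /\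
  is_ECCC (Ep (1 / 2)) (3 / 4).
Proof.
  assert (HJ : forall p : R, 0 <= p <= 1 ->
             is_ECCC (Ep p) (3 / 4 + 1 / 4 * Rabs (2 * p - 1))).
  { intros p Hp; split.
    - intros a b Hab; rewrite eccc_obj_Ep by exact Hab.
      apply bloch_objective_le, bloch_zx_le, (proj1 Hab); exact Hp.
    - destruct (Rle_dec (1 / 2) p).
      + exists ket0, ket1; split; [exact orthonormal_ket01 |].
        rewrite eccc_obj_Ep, (proj1 bloch_ket0), (proj2 bloch_ket0) by exact orthonormal_ket01.
        rewrite Rabs_right by lra; field.
      + exists ketp, ketm; split; [exact orthonormal_ketpm |].
        rewrite eccc_obj_Ep, (proj1 bloch_ketp), (proj2 bloch_ketp) by exact orthonormal_ketpm.
        rewrite Rabs_left by lra; field. }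
  split; [exact HJ |].
  pose proof (HJ (1 / 2) ltac:(lra)) as Hhalf.
  replace (2 * (1 / 2) - 1) with 0 in Hhalf by field.
  rewrite Rabs_R0, Rmult_0_r, Rplus_0_r in Hhalf; exact Hhalf.
Qed.
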